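(* In the setting of the context, the linear operator $\mathcal M:\mathbb S^n\to\mathbb S^n$ satisfies: (a) $\mathcal M$ is firmly nonexpansive with respect to the Frobenius norm, i.e., $\langle\mathcal M(H),H\rangle\ge\|\mathcal M(H)\|_F^2$ for all $H$; (b) the sequence of operators $\mathcal M^k$ converges to $\Pi_{\mathrm{Fix}(\mathcal M)}$ as $k\to\infty$; (c) $H\in\mathrm{Fix}(\mathcal M)$ if and only if $H_O=0$, $Q_\star\begin{pmatrix}H_X&0\\0&0\end{pmatrix}Q_\star^\top\in\mathcal N(\mathcal A)$, and $Q_\star\begin{pmatrix}0&0\\0&H_S\end{pmatrix}Q_\star^\top\in\mathcal R(\mathcal A^* )$; (d) $\|\mathcal M-\Pi_{\mathrm{Fix}(\mathcal M)}\|_{\mathrm{op}}<1$.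
   Context: $\mathbb S^n$: real symmetric matrices with $\langle X,Y\rangle=\operatorname{tr}(XY)$ and Frobenius norm. Data $A_1,\dots,A_m\in\mathbb S^n$ defining $\mathcal AX=(\langle A_i,X\rangle)_i$, assumed surjective; $\mathcal A^*y=\sum y_iA_i$; $\mathcal R(\mathcal A^* )$ range, $\mathcal N(\mathcal A)$ null space; $\mathcal P=\mathcal A^*(\mathcal A\mathcal A^* )^{-1}\mathcal A$, $\mathcal P^\perp=\mathrm{Id}-\mathcal P$. Let $Z_\star=X_\star-\sigma S_\star$ ($\sigma>0$) for a strictly complementary KKT point $(X_\star,y_\star,S_\star)$ of the SDP pair min $\langle C,X\rangle$ s.t. $\mathcal AX=b$, $X\succeq0$ / max $b^\top y$ s.t. $\mathcal A^*y+S=C$, $S\succeq0$ (the limit of the one-step ADMM iteration), so that for an orthogonal $Q_\star$, $Z_\star=Q_\star\operatorname{diag}(\lambda_1,\dots,\lambda_n)Q_\star^\top$ with $\lambda_1\ge\dots\ge\lambda_r>0>\lambda_{r+1}\ge\dots\ge\lambda_n$, $r=\operatorname{rank}X_\star$. $\Theta\in\mathbb R^{(n-r)\times r}$, $\Theta_{ij}=\lambda_j/(\lambda_j-\lambda_{i+r})$, $\Omega=\begin{pmatrix}E_r&\Theta^\top\\\Theta&0\end{pmatrix}$ ($E_r$ all-ones). For $H\in\mathbb S^n$ write $Q_\star^\top HQ_\star=\begin{pmatrix}H_X&H_O^\top\\H_O&H_S\end{pmatrix}$, $H_X\in\mathbb S^r$, $H_O\in\mathbb R^{(n-r)\times r}$,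 $H_S\in\mathbb S^{n-r}$. $\mathcal D(H)=Q_\star(\Omega\circ(Q_\star^\top HQ_\star))Q_\star^\top$ ($\circ$ Hadamard), $\mathcal D^\perp(H)=H-\mathcal D(H)$, $\mathcal M(H)=\mathcal P\mathcal D^\perp(H)+\mathcal P^\perp\mathcal D(H)$. $\mathrm{Fix}(\mathcal M)=\{H:\mathcal M(H)=H\}$, $\Pi_{\mathrm{Fix}(\mathcal M)}$ the orthogonal projection onto it, $\|\cdot\|_{\mathrm{op}}$ the Frobenius-induced operator norm. *)

From HB Require Import structures.
From mathcomp Require Import all_boot all_order all_algebra.
From mathcomp Require Import all_classical all_reals all_analysis.
Set Implicit Arguments. Unset Strict Implicit. Unset Printing Implicit Defensive.
Import Order.TTheory GRing.Theory Num.Theory.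
Local Open Scope ring_scope.
Local Open Scope classical_set_scope.

Section SDPDefs.
Variable R : realType.

Definition symmx (n : nat) (X : 'M[R]_n) : Prop := X^T = X.

Definition inner (n : nat) (X Y : 'M[R]_n) : R := \tr (X *m Y).
Definition fnorm (n : nat) (X : 'M[R]_n) : R := Num.sqrt (inner X X).

Definition psdmx (n : nat) (X : 'M[R]_n) : Prop :=
  symmx X /\ forall v : 'cV[R]_n, 0 <= (v^T *m X *m v) 0 0.

Definition opA (m n : nat) (A : 'I_m -> 'M[R]_n) (X : 'M[R]_n) : 'cV[R]_m :=
  \col_i inner (A i) X.
Definition opAadj (m n : nat) (A : 'I_m -> 'M[R]_n) (y : 'cV[R]_m) : 'M[R]_n :=
  \sum_i y i 0 *: A i.

(* matrix of A A^adj: [A A^adj]_{ij} = <A_i, A_j> *)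
Definition gramA (m n : nat) (A : 'I_m -> 'M[R]_n) : 'M[R]_m :=
  \matrix_(i, j) inner (A i) (A j).

Definition projP (m n : nat) (A : 'I_m -> 'M[R]_n) (X : 'M[R]_n) : 'M[R]_n :=
  opAadj A (invmx (gramA A) *m opA A X).
Definition projPperp (m n : nat) (A : 'I_m -> 'M[R]_n) (X : 'M[R]_n) : 'M[R]_n :=
  X - projP A X.

(* Ω = [[E_r, Θ^T],[Θ, 0]] with Θ_{ij} = λ_j/(λ_j - λ_{i+r}), written entrywise
   with 0-based indices: rows/columns < r form the "X" block. *)
Definition Omega (n r : nat) (lam : 'I_n -> R) : 'M[R]_n :=
  \matrix_(p, q)
    if (p < r)%N && (q < r)%N then 1
    else if (p < r)%N && ~~ (q < r)%N then lam p / (lam p - lam q)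
    else if ~~ (p < r)%N && (q < r)%N then lam q / (lam q - lam p)
    else 0.

Definition hadamard (n : nat) (X Y : 'M[R]_n) : 'M[R]_n :=
  \matrix_(i, j) (X i j * Y i j).

Definition opD (n r : nat) (Q : 'M[R]_n) (lam : 'I_n -> R) (H : 'M[R]_n) :=
  Q *m hadamard (Omega r lam) (Q^T *m H *m Q) *m Q^T.
Definition opDperp (n r : nat) (Q : 'M[R]_n) (lam : 'I_n -> R) (H : 'M[R]_n) :=
  H - opD r Q lam H.

Definition opM (m n r : nat) (A : 'I_m -> 'M[R]_n) (Q : 'M[R]_n)
  (lam : 'I_n -> R) (H : 'M[R]_n) : 'M[R]_n :=
  projP A (opDperp r Q lam H) + projPperp A (opD r Q lam H).

Definition isFix (n : nat) (T : 'M[R]_n -> 'M[R]_n) (H : 'M[R]_n) : Prop :=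
  symmx H /\ T H = H.

Definition is_proj_Fix (n : nat) (T Pi : 'M[R]_n -> 'M[R]_n) : Prop :=
  forall H, symmx H ->
    isFix T (Pi H) /\ (forall K, isFix T K -> inner (H - Pi H) K = 0).

Definition opnorm (n : nat) (T : 'M[R]_n -> 'M[R]_n) : R :=
  sup [set fnorm (T H) | H in [set H : 'M[R]_n | symmx H /\ fnorm H <= 1]].

End SDPDefs.

(* M = P(I - D) + (I - P)D, where P is the orthogonal projection onto the range
   of A^* and D multiplies the entries of Q^T H Q by the weights Omega, which
   lie in [0, 1], strictly inside on the off-diagonal blocks.  As P is a
   self-adjoint idempotent, <M H, H> - |M H|^2 = <D H, H - D H>
   = sum Omega (1 - Omega) (Q^T H Q)^2 >= 0, which is (a); this vanishes exactly
   when H_O = 0, and then M H = H splits into the block conditions of (c).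
   A firmly nonexpansive linear map sends the orthogonal complement of its fixed
   points into itself and is strictly norm-decreasing there.  In finite
   dimension the strict inequality is uniform, because a positive definite
   form x G x^T is bounded below by |x|^2 / C with C bounding the entries of
   G^-1.  This gives a factor c < 1 on Fix(M)^perp, hence |M^k - Pi| <= c^k,
   which is (d) for k = 1 and gives (b). *)

From HB Require Import structures.
From mathcomp Require Import all_boot all_order all_algebra.
From mathcomp Require Import all_classical all_reals all_analysis.
From mathcomp Require Import ring lra.
Import Order.TTheory GRing.Theory Num.Theory.
Import numFieldNormedType.Exports.
Local Open Scope ring_scope.
Local Open Scope classical_set_scope.
Set Implicit Arguments. Unset Strict Implicit. Unset Printing Implicit Defensive.

Section FrobeniusInner.
Variables (R : realType) (p q : nat).
Implicit Types X Y Z : 'M[R]_(p, q).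

Definition frob X Y : R := \tr (X^T *m Y).

Lemma frobE X Y : frob X Y = \sum_i \sum_j X j i * Y j i.
Proof.
by apply: eq_bigr => i _; rewrite !mxE; apply: eq_bigr => j _; rewrite mxE.
Qed.

Lemma frobC X Y : frob X Y = frob Y X.
Proof. by rewrite !frobE; apply: eq_bigr => i _; apply: eq_bigr => j _; rewrite mulrC. Qed.

Lemma frobDl X Y Z : frob (X + Y) Z = frob X Z + frob Y Z.
Proof.
rewrite !frobE -big_split; apply: eq_bigr => i _.
by rewrite -big_split; apply: eq_bigr => j _; rewrite !mxE mulrDl.
Qed.

Lemma frobZl a X Y : frob (a *: X) Y = a * frob X Y.
Proof.
rewrite !frobE mulr_sumr; apply: eq_bigr => i _.
by rewrite mulr_sumr; apply: eq_bigr => j _; rewrite !mxE mulrA.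
Qed.

Lemma frobNl X Y : frob (- X) Y = - frob X Y.
Proof. by rewrite -scaleN1r frobZl mulN1r. Qed.

Lemma frobBl X Y Z : frob (X - Y) Z = frob X Z - frob Y Z.
Proof. by rewrite frobDl frobNl. Qed.

Lemma frobDr X Y Z : frob X (Y + Z) = frob X Y + frob X Z.
Proof. by rewrite frobC frobDl !(frobC X). Qed.

Lemma frobZr a X Y : frob X (a *: Y) = a * frob X Y.
Proof. by rewrite frobC frobZl frobC. Qed.

Lemma frobNr X Y : frob X (- Y) = - frob X Y.
Proof. by rewrite frobC frobNl frobC. Qed.

Lemma frobBr X Y Z : frob X (Y - Z) = frob X Y - frob X Z.
Proof. by rewrite frobDr frobNr. Qed.

Lemma frob0l X : frob 0 X = 0.
Proof. by rewrite -(scale0r 0) frobZl mul0r. Qed.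

Lemma frob0r X : frob X 0 = 0.
Proof. by rewrite frobC frob0l. Qed.

Lemma frob_sumr (I : finType) X (G : I -> 'M[R]_(p, q)) :
  frob X (\sum_i G i) = \sum_i frob X (G i).
Proof. by apply: (big_morph _ (frobDr X) (frob0r X)). Qed.

Lemma frob_ge0 X : 0 <= frob X X.
Proof. by rewrite frobE; do 2!apply: sumr_ge0 => ? _; rewrite -expr2 sqr_ge0. Qed.

Lemma frob_eq0 X : frob X X = 0 -> X = 0.
Proof.
rewrite frobE => X0; apply/matrixP => j i; rewrite mxE.
have sq_ge0 k l : 0 <= X k l * X k l by rewrite -expr2 sqr_ge0.
have col0 : \sum_k X k i * X k i = 0.
  by apply: (psumr_eq0P _ X0) => // i' _; apply: sumr_ge0.
have /eqP : X j i * X j i = 0 by apply: (psumr_eq0P _ col0).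
by rewrite mulf_eq0 orbb => /eqP.
Qed.

Lemma frob_mulmxr X (B : 'M[R]_q) Y : frob (X *m B^T) Y = frob X (Y *m B).
Proof. by rewrite /frob trmx_mul trmxK -mulmxA mxtrace_mulC mulmxA. Qed.

End FrobeniusInner.

Lemma frob_trl (R : realType) p q (X : 'M[R]_(q, p)) (Y : 'M[R]_(p, q)) :
  frob X^T Y = frob X Y^T.
Proof.
by rewrite !frobE exchange_big; apply: eq_bigr => i _; apply: eq_bigr => j _; rewrite !mxE.
Qed.

Lemma frob_mxvec (R : realType) p q (X Y : 'M[R]_(p, q)) :
  frob (mxvec X) (mxvec Y) = frob X Y.
Proof.
rewrite !frobE (reindex _ (curry_mxvec_bij p q)) /= [RHS]exchange_big [RHS]pair_big.
by apply: eq_bigr => -[i j] _; rewrite big_ord1 !mxvecE.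
Qed.

Section OrthogonalProjection.
Variables (R : realType) (p q : nat) (P : 'M[R]_(p, q) -> 'M[R]_(p, q)).
Hypothesis P_adj : forall X Y, frob (P X) Y = frob X (P Y).
Hypothesis P_idem : forall X, P (P X) = P X.
Implicit Types X Y : 'M[R]_(p, q).

Lemma frob_proj_proj X Y : frob (P X) (P Y) = frob (P X) Y.
Proof. by rewrite -P_adj P_idem. Qed.

Lemma frob_proj_res X Y : frob (P X) (Y - P Y) = 0.
Proof. by rewrite frobBr frob_proj_proj subrr. Qed.

Lemma frob_proj_pythagoras X :
  frob X X = frob (P X) (P X) + frob (X - P X) (X - P X).
Proof.
have cross := frob_proj_res X X.
have eX : X = P X + (X - P X) by rewrite addrC subrK.
move: (X - P X) cross eX => W cross eX.
by rewrite {1 2}eX frobDl !frobDr cross (frobC W) cross addr0 add0r.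
Qed.

Lemma frob_proj_le X : frob (P X) (P X) <= frob X X.
Proof. by rewrite [leRHS]frob_proj_pythagoras lerDl frob_ge0. Qed.

Lemma frob_proj_res_le X : frob (X - P X) (X - P X) <= frob X X.
Proof. by rewrite [leRHS]frob_proj_pythagoras lerDr frob_ge0. Qed.

(* With [X = D H] and [Y = H - D H], [Z] is [opM H]. *)
Lemma frob_proj_swap X Y : let Z := P Y + (X - P X) in
  frob Z (X + Y) - frob Z Z = frob X Y.
Proof.
have := frob_proj_proj X X; have := frob_proj_proj Y Y; have := frob_proj_proj Y X.
have := P_adj X Y; have := frobC X (P X); have := frobC X (P Y).
have := frobC (P X) Y; have := frobC (P X) (P Y).
rewrite /= !(frobDl, frobDr, frobNl, frobNr); lra.
Qed.

End OrthogonalProjection.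
Section SpanProjection.
Variables (R : realType) (p q k : nat) (F : 'I_k -> 'M[R]_(p, q)).
Implicit Types X Y : 'M[R]_(p, q).

Definition coefs X : 'cV[R]_k := \col_i frob (F i) X.
Definition lincomb (y : 'cV[R]_k) : 'M[R]_(p, q) := \sum_i y i 0 *: F i.
Definition gram : 'M[R]_k := \matrix_(i, j) frob (F i) (F j).
Definition proj_span X := lincomb (invmx gram *m coefs X).

Fact coefs_is_linear : linear coefs.
Proof. by move=> a X Y; apply/matrixP => i j; rewrite !mxE frobDr frobZr. Qed.
HB.instance Definition _ := GRing.isLinear.Build R _ _ _ coefs coefs_is_linear.

Fact lincomb_is_linear : linear lincomb.
Proof.
move=> a y z; rewrite /lincomb scaler_sumr -big_split.
by apply: eq_bigr => i _; rewrite !mxE scalerDl scalerA.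
Qed.
HB.instance Definition _ := GRing.isLinear.Build R _ _ _ lincomb lincomb_is_linear.

Fact proj_span_is_linear : linear proj_span.
Proof. by move=> a X Y; rewrite /proj_span linearP mulmxDr -scalemxAr linearP. Qed.
HB.instance Definition _ :=
  GRing.isLinear.Build R _ _ _ proj_span proj_span_is_linear.

Lemma frob_lincomb y X : frob (lincomb y) X = (y^T *m coefs X) 0 0.
Proof.
rewrite frobC frob_sumr mxE; apply: eq_bigr => i _.
by rewrite frobZr !mxE frobC.
Qed.

Lemma coefs_lincomb y : coefs (lincomb y) = gram *m y.
Proof.
apply/matrixP => i j; rewrite !mxE (ord1 j) frob_sumr.
by apply: eq_bigr => l _; rewrite frobZr !mxE mulrC.
Qed.

Lemma gram_tr : gram^T = gram.
Proof. by apply/matrixP => i j; rewrite !mxE frobC. Qed.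

Lemma gram_unit : (forall y, lincomb y = 0 -> y = 0) -> gram \in unitmx.
Proof.
move=> free; rewrite -row_free_unit -kermx_eq0; apply/eqP/row_matrixP => i.
rewrite row0; set v := row i _.
have vG : gram *m v^T = 0.
  have /eqP vG0 : v *m gram == 0 by rewrite -sub_kermx row_sub.
  by rewrite -gram_tr -trmx_mul vG0 trmx0.
suff /(congr1 trmx) : v^T = 0 by rewrite trmxK trmx0.
by apply/free/frob_eq0; rewrite frob_lincomb coefs_lincomb vG mulmx0 mxE.
Qed.

Lemma frob_proj_span X Y : frob (proj_span X) Y = frob X (proj_span Y).
Proof.
have tr11 (M : 'M[R]_1) : M 0 0 = M^T 0 0 by rewrite mxE.
rewrite [RHS]frobC !frob_lincomb [RHS]tr11.
by rewrite !trmx_mul !trmxK trmx_inv gram_tr mulmxA.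
Qed.

Hypothesis gramU : gram \in unitmx.

Lemma coefs_proj_span X : coefs (proj_span X) = coefs X.
Proof. by rewrite /proj_span coefs_lincomb mulKVmx. Qed.

Lemma proj_span_lincomb y : proj_span (lincomb y) = lincomb y.
Proof. by rewrite /proj_span coefs_lincomb mulKmx. Qed.

Lemma proj_span_idem X : proj_span (proj_span X) = proj_span X.
Proof. by rewrite {1}/proj_span coefs_proj_span. Qed.

Lemma frob_lincomb_res y X : frob (lincomb y) (X - proj_span X) = 0.
Proof. by rewrite frob_lincomb linearB /= coefs_proj_span subrr mulmx0 mxE. Qed.

End SpanProjection.

Section KernelProjection.
Variables (R : realType) (p q p' q' : nat).
Variable L : {linear 'M[R]_(p, q) -> 'M[R]_(p', q')}.
Implicit Types X Y K : 'M[R]_(p, q).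

Local Notation kerL := (kermx (lin_mx L)).

Definition ker_basis (i : 'I_(\rank kerL)) : 'M[R]_(p, q) :=
  vec_mx (row i (row_base kerL)).
Definition ker_proj := proj_span ker_basis.

Lemma lincomb_ker_basis y : lincomb ker_basis y = vec_mx (y^T *m row_base kerL).
Proof.
rewrite mulmx_sum_row linear_sum; apply: eq_bigr => i _.
by rewrite linearZ mxE.
Qed.

Lemma sub_kermx_lin X : (mxvec X <= kerL)%MS = (L X == 0).
Proof. by rewrite sub_kermx mul_vec_lin mxvec_eq0. Qed.

Lemma ker_basis_free y : lincomb ker_basis y = 0 -> y = 0.
Proof.
rewrite lincomb_ker_basis => /(congr1 mxvec); rewrite vec_mxK linear0.
rewrite -(mul0mx _ (row_base kerL)) => /(row_free_inj (row_base_free _)).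
by move/(congr1 trmx); rewrite trmxK trmx0.
Qed.

Lemma gram_ker_basis_unit : gram ker_basis \in unitmx.
Proof. exact: gram_unit ker_basis_free. Qed.

Lemma ker_lincomb_basis y : L (lincomb ker_basis y) = 0.
Proof.
apply/eqP; rewrite -sub_kermx_lin lincomb_ker_basis vec_mxK.
by rewrite (submx_trans (submxMl _ _)) ?eq_row_base.
Qed.

Lemma ker_basis_span K : L K = 0 -> exists y, K = lincomb ker_basis y.
Proof.
move=> /eqP; rewrite -sub_kermx_lin -(eq_row_base kerL) => /submxP[y Ky].
by exists y^T; rewrite lincomb_ker_basis trmxK -Ky mxvecK.
Qed.

Lemma ker_proj_ker X : L (ker_proj X) = 0.
Proof. exact: ker_lincomb_basis. Qed.

Lemma frob_ker_proj X Y : frob (ker_proj X) Y = frob X (ker_proj Y).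
Proof. exact: frob_proj_span. Qed.

Lemma ker_proj_idem X : ker_proj (ker_proj X) = ker_proj X.
Proof. exact: (proj_span_idem gram_ker_basis_unit). Qed.

Lemma frob_ker_proj_res X K : L K = 0 -> frob (X - ker_proj X) K = 0.
Proof.
by move=> /ker_basis_span[y ->]; rewrite frobC frob_lincomb_res ?gram_ker_basis_unit.
Qed.

Lemma ker_proj_eq0 W : (forall K, L K = 0 -> frob W K = 0) -> ker_proj W = 0.
Proof.
move=> Wperp; apply: frob_eq0.
by rewrite (frob_proj_proj frob_ker_proj ker_proj_idem) frobC Wperp ?ker_proj_ker.
Qed.

Lemma ker_proj_unique X Y : L Y = 0 -> (forall K, L K = 0 -> frob (X - Y) K = 0) ->
  Y = ker_proj X.
Proof.
move=> LY Yres; set D := Y - ker_proj X.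
have LD : L D = 0 by rewrite linearB /= LY ker_proj_ker subrr.
have eD : D = (X - ker_proj X) - (X - Y) by rewrite opprB [RHS]addrC addrA subrK.
apply/eqP; rewrite -subr_eq0; apply/eqP/frob_eq0.
by rewrite -/D {1}eD frobBl frob_ker_proj_res // Yres // subrr.
Qed.

End KernelProjection.

Section PositiveDefinite.
Variables (R : realType) (N : nat).
Implicit Types (x y : 'rV[R]_N) (G : 'M[R]_N).

Lemma quad_form_le G x : frob x (x *m G) <= (\sum_i \sum_j `|G j i|) * frob x x.
Proof.
set s := frob x x.
have sq_le i : x 0 i * x 0 i <= s.
  rewrite /s frobE (bigD1 i) //= big_ord1 lerDl.
  by apply: sumr_ge0 => k _; rewrite big_ord1 -expr2 sqr_ge0.
rewrite frobE mulr_suml; apply: ler_sum => j _; rewrite big_ord1 !mxE mulr_sumr mulr_suml.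
apply: ler_sum => i _; rewrite mulrA.
have := sq_le i; have := sq_le j.
move: (x 0 j) (x 0 i) (G i j) => a c d hc ha.
have h1 : a * c <= s by nra.
have h2 : - s <= a * c by nra.
by case: (lerP 0 d) => hd; [rewrite ger0_norm | rewrite ltr0_norm]; nra.
Qed.

Lemma pos_def_bound G : G^T = G -> (forall x, x != 0 -> 0 < frob (x *m G) x) ->
  exists2 e : R, 0 < e & forall x, e * frob x x <= frob (x *m G) x.
Proof.
move=> sG posG.
have psd x : 0 <= frob (x *m G) x.
  by have [->|/posG/ltW//] := eqVneq x 0; rewrite mul0mx frob0l.
have GU : G \in unitmx.
  rewrite -row_free_unit -kermx_eq0; apply/eqP/row_matrixP => i; rewrite row0.
  have /eqP vG : row i (kermx G) *m G == 0 by rewrite -sub_kermx row_sub.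
  by apply/eqP/contraT => /posG; rewrite vG frob0l ltxx.
set C := \sum_i \sum_j `|invmx G j i| + 1.
have C1 : 1 <= C by rewrite lerDr; do 2!apply: sumr_ge0 => ? _.
exists C^-1 => [|x]; first by rewrite invr_gt0; lra.
(* Positivity of the form at [x - u / C] with [u = x G^-1] bounds it below. *)
set u := x *m invmx G; set t := C^-1.
have uG : u *m G = x by rewrite mulmxKV.
have uu : frob x u <= C * frob x x.
  by apply: le_trans (quad_form_le _ _) _; rewrite ler_wpM2r ?frob_ge0 ?lerDl.
have xu : frob (x *m G) u = frob x x by rewrite -[G]sG frob_mulmxr uG.
have t0 : 0 < t by rewrite invr_gt0; lra.
have tuu : t * (t * frob x u) <= t * frob x x.
  by apply: ler_wpM2l; [exact: ltW | rewrite /t ler_pdivrMl; lra].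
have := psd (x - t *: u).
rewrite mulmxBl -scalemxAl uG !(frobBl, frobBr, frobZl, frobZr) xu; nra.
Qed.

End PositiveDefinite.

Lemma uniform_contraction (R : realType) p q (N : {linear 'M[R]_(p, q) -> 'M[R]_(p, q)}) :
  (forall H, H != 0 -> frob (N H) (N H) < frob H H) ->
  exists c : R, [/\ 0 <= c, c < 1 & forall H, frob (N H) (N H) <= c ^+ 2 * frob H H].
Proof.
move=> N_lt; pose NL := lin_mx N; pose G := 1%:M - NL *m NL^T.
have GE H : frob (mxvec H *m G) (mxvec H) = frob H H - frob (N H) (N H).
  by rewrite mulmxBr mulmx1 mulmxA frobBl frob_mulmxr mul_vec_lin !frob_mxvec.
have G_tr : G^T = G by rewrite linearB /= trmx1 trmx_mul trmxK.
have [|e e0 He] := pos_def_bound G_tr.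
  by move=> x x_neq0; rewrite -(vec_mxK x) GE subr_gt0 N_lt // vec_mx_eq0.
have e1_ge0 : 0 <= 1 - Num.min e 1 by rewrite subr_ge0 ge_min lexx orbT.
exists (Num.sqrt (1 - Num.min e 1)); split; first exact: sqrtr_ge0.
  have m0 : 0 < Num.min e 1 by rewrite lt_min e0 ltr01.
  by rewrite -[ltRHS]sqrtr1 ltr_sqrt //; lra.
move=> H; rewrite sqr_sqrtr //.
have := He (mxvec H); rewrite GE frob_mxvec.
have : Num.min e 1 <= e by rewrite ge_min lexx.
have := frob_ge0 H; nra.
Qed.

Section FirmlyNonexpansive.
Variables (R : realType) (p q : nat) (T : {linear 'M[R]_(p, q) -> 'M[R]_(p, q)}).
Hypothesis T_firm : forall H, frob (T H) (T H) <= frob (T H) H.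
Implicit Types H W F : 'M[R]_(p, q).

Lemma firm_dist H : frob (T H - H) (T H - H) <= frob H H - frob (T H) (T H).
Proof.
have := T_firm H; rewrite !(frobBl, frobBr) (frobC H); lra.
Qed.

Lemma firm_nonexp H : frob (T H) (T H) <= frob H H.
Proof. have := firm_dist H; have := frob_ge0 (T H - H); lra. Qed.

Lemma firm_nonexp_eq H : frob (T H) (T H) = frob H H -> T H = H.
Proof.
move=> eq_norm; apply/eqP; rewrite -subr_eq0; apply/eqP/frob_eq0/eqP.
by rewrite eq_le frob_ge0 andbT; have := firm_dist H; lra.
Qed.

Lemma firm_orth_fix W F : T F = F -> frob W F = 0 -> frob (T W) F = 0.
Proof.
move=> TF WF; set a := frob (T W) F; set c := frob (T W) (T W) - frob (T W) W.
have c_le0 : c <= 0 by rewrite subr_le0 T_firm.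
(* Firm nonexpansiveness at [F + t W] gives [t a + t^2 c <= 0] for all [t];
   [t = a / (1 - c)] turns this into [t^2 <= 0]. *)
have key t : t * a + t ^+ 2 * c <= 0.
  have := T_firm (F + t *: W); rewrite linearD linearZ TF.
  rewrite !(frobDl, frobDr, frobZl, frobZr) (frobC F W) WF (frobC F (T W)) -/a.
  rewrite /c; nra.
set w := (1 - c)^-1.
have w0 : 0 < w by rewrite invr_gt0; lra.
have wc : w * (1 - c) = 1 by rewrite mulVf // lt0r_neq0 //; lra.
have := key (a * w).
have -> : a * w * a + (a * w) ^+ 2 * c = (a * w) ^+ 2.
  by rewrite -[X in X + _ = _]mulr1 -wc; ring.
rewrite le_eqVlt ltNge sqr_ge0 orbF sqrf_eq0 mulf_eq0 (gt_eqF w0) orbF.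
by move/eqP.
Qed.

End FirmlyNonexpansive.

Lemma frob_conj (R : realType) p n (Q : 'M[R]_(p, n)) (Y : 'M[R]_n) (Z : 'M[R]_p) :
  frob (Q *m Y *m Q^T) Z = frob Y (Q^T *m Z *m Q).
Proof. by rewrite /frob !trmx_mul trmxK -!mulmxA mxtrace_mulC !mulmxA. Qed.

Section Hadamard.
Variables (R : realType) (n : nat) (W : 'M[R]_n).

Fact hadamard_is_linear : linear (hadamard W).
Proof. by move=> a X Y; apply/matrixP => i j; rewrite !mxE mulrDr mulrCA. Qed.
HB.instance Definition _ :=
  GRing.isLinear.Build R _ _ _ (hadamard W) hadamard_is_linear.

Lemma hadamard_tr X : (hadamard W X)^T = hadamard W^T X^T.
Proof. by apply/matrixP => i j; rewrite !mxE. Qed.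

End Hadamard.

Section OmegaWeights.
Variables (R : realType) (n r : nat) (lam : 'I_n -> R).
Local Notation Om := (Omega r lam).

Lemma Omega_tr : Om^T = Om.
Proof. by apply/matrixP => i j; rewrite !mxE; case: (i < r)%N; case: (j < r)%N. Qed.

(* The X- and S-parts of a matrix, zero-padded in place rather than extracted
   as the submatrices [H_X] and [H_S]. *)
Definition blockX (Z : 'M[R]_n) : 'M[R]_n :=
  \matrix_(i, j) if (i < r)%N && (j < r)%N then Z i j else 0.
Definition blockS (Z : 'M[R]_n) : 'M[R]_n :=
  \matrix_(i, j) if ~~ (i < r)%N && ~~ (j < r)%N then Z i j else 0.

Section BlockDiagonal.
Variable Z : 'M[R]_n.
Hypothesis Z_blockdiag : forall i j : 'I_n, (i < r)%N != (j < r)%N -> Z i j = 0.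

Lemma blockXS_sum : blockX Z + blockS Z = Z.
Proof.
apply/matrixP => i j; rewrite !mxE.
have := @Z_blockdiag i j; case: (i < r)%N; case: (j < r)%N => /= Zij;
  by rewrite ?addr0 ?add0r // Zij.
Qed.

Lemma hadamard_Omega_blockdiag : hadamard Om Z = blockX Z.
Proof.
apply/matrixP => i j; rewrite !mxE.
have := @Z_blockdiag i j; case: (i < r)%N; case: (j < r)%N => /= Zij;
  by rewrite ?mul1r ?mul0r //; rewrite Zij ?mulr0.
Qed.

End BlockDiagonal.

Hypothesis lam_gt0 : forall i : 'I_n, (i < r)%N -> 0 < lam i.
Hypothesis lam_lt0 : forall i : 'I_n, (r <= i)%N -> lam i < 0.

Lemma Omega_off (i j : 'I_n) : (i < r)%N != (j < r)%N -> 0 < Om i j < 1.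
Proof.
have frac (x y : R) : 0 < x -> y < 0 -> 0 < x / (x - y) < 1.
  by move=> x0 y0; rewrite divr_gt0 ?ltr_pdivrMr /=; lra.
rewrite mxE; case ir: (i < r)%N; case jr: (j < r)%N => //= _.
  by apply: frac; [exact: lam_gt0 | apply: lam_lt0; rewrite leqNgt jr].
by apply: frac; [exact: lam_gt0 | apply: lam_lt0; rewrite leqNgt ir].
Qed.

Lemma Omega_ge0_le1 (i j : 'I_n) : 0 <= Om i j <= 1.
Proof.
have [/Omega_off/andP[/ltW-> /ltW->] //|] := boolP ((i < r)%N != (j < r)%N).
by rewrite negbK mxE => /eqP <-; case: (i < r)%N; rewrite /= ?lexx ?ler01.
Qed.

End OmegaWeights.

Section Symmetric.
Variables (R : realType) (n : nat).
Implicit Types X Y : 'M[R]_n.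

Lemma inner_frob X Y : symmx X -> inner X Y = frob X Y.
Proof. by rewrite /symmx /inner /frob => ->. Qed.

Lemma fnorm_sqr X : symmx X -> fnorm X ^+ 2 = frob X X.
Proof. by move=> sX; rewrite /fnorm inner_frob // sqr_sqrtr // frob_ge0. Qed.

Lemma symmx0 : symmx (0 : 'M[R]_n).
Proof. exact: trmx0. Qed.

Lemma symmxD X Y : symmx X -> symmx Y -> symmx (X + Y).
Proof. by rewrite /symmx linearD => /= -> ->. Qed.

Lemma symmxB X Y : symmx X -> symmx Y -> symmx (X - Y).
Proof. by rewrite /symmx linearB => /= -> ->. Qed.

Lemma symmx_lincomb k (F : 'I_k -> 'M[R]_n) y :
  (forall i, symmx (F i)) -> symmx (lincomb F y).
Proof.
move=> sF; apply: (big_ind (fun X => symmx X) symmx0 symmxD) => i _.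
by rewrite /symmx linearZ /= sF.
Qed.

Definition symmpart X := 2^-1 *: (X + X^T).

Fact symmpart_is_linear : linear symmpart.
Proof. by move=> a X Y; apply/matrixP => i j; rewrite !mxE; lra. Qed.
HB.instance Definition _ := GRing.isLinear.Build R _ _ _ symmpart symmpart_is_linear.

Lemma symmx_symmpart X : symmx (symmpart X).
Proof. by rewrite /symmx /symmpart linearZ linearD /= trmxK addrC. Qed.

Lemma symmpart_id X : symmx X -> symmpart X = X.
Proof.
by rewrite /symmpart => ->; apply/matrixP => i j; rewrite !mxE; lra.
Qed.

Lemma symmpart_idem X : symmpart (symmpart X) = symmpart X.
Proof. exact/symmpart_id/symmx_symmpart. Qed.

Lemma frob_symmpart X Y : frob (symmpart X) Y = frob X (symmpart Y).
Proof. by rewrite frobZl frobZr frobDl frobDr frob_trl. Qed.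

End Symmetric.

Section ConstraintProjection.
Variables (R : realType) (m n : nat) (A : 'I_m -> 'M[R]_n).

Fact opA_is_linear : linear (opA A).
Proof.
by move=> a X Y; apply/matrixP => i j; rewrite !mxE /inner mulmxDr -scalemxAr mxtraceD mxtraceZ.
Qed.
HB.instance Definition _ := GRing.isLinear.Build R _ _ _ (opA A) opA_is_linear.

Fact projP_is_linear : linear (projP A).
Proof.
move=> a X Y; rewrite /projP linearP mulmxDr -scalemxAr.
exact: lincomb_is_linear.
Qed.
HB.instance Definition _ := GRing.isLinear.Build R _ _ _ (projP A) projP_is_linear.

Hypothesis A_sym : forall i, symmx (A i).
Hypothesis A_surj : forall y : 'cV[R]_m, exists X, symmx X /\ opA A X = y.

Lemma opA_coefs X : opA A X = coefs A X.
Proof. by apply/matrixP => i j; rewrite !mxE inner_frob. Qed.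

Lemma projP_proj_span X : projP A X = proj_span A X.
Proof.
rewrite /projP opA_coefs; congr (opAadj _ (invmx _ *m _)).
by apply/matrixP => i j; rewrite !mxE inner_frob.
Qed.

Lemma gramA_unit : gram A \in unitmx.
Proof.
apply: gram_unit => y Ay0; have [X [_ AX]] := A_surj y.
apply/frob_eq0; rewrite -{2}AX opA_coefs {1}/frob /mxtrace big_ord1 -frob_lincomb.
by rewrite Ay0 frob0l.
Qed.

End ConstraintProjection.

Section SmoothingOperator.
Variables (R : realType) (n r : nat) (Q : 'M[R]_n) (lam : 'I_n -> R).
Local Notation D := (opD r Q lam).
Local Notation Om := (Omega r lam).
Implicit Types H : 'M[R]_n.

Fact opD_is_linear : linear D.
Proof.
move=> a X Y; rewrite /opD mulmxDr mulmxDl -scalemxAr -scalemxAl linearP /=.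
by rewrite mulmxDr mulmxDl -scalemxAr -scalemxAl.
Qed.
HB.instance Definition _ := GRing.isLinear.Build R _ _ _ D opD_is_linear.

Lemma opD_sym H : symmx H -> symmx (D H).
Proof.
rewrite /symmx /opD => sH.
by rewrite !trmx_mul trmxK hadamard_tr Omega_tr !trmx_mul trmxK sH !mulmxA.
Qed.

Hypothesis Q_orth : Q^T *m Q = 1%:M.

Lemma conj_orth Z : Q^T *m (Q *m Z *m Q^T) *m Q = Z.
Proof. by rewrite !mulmxA Q_orth mul1mx -mulmxA Q_orth mulmx1. Qed.

Lemma frob_opD_res H : frob (D H) (H - D H) =
  \sum_i \sum_j Om j i * (1 - Om j i) * (Q^T *m H *m Q) j i ^+ 2.
Proof.
rewrite {1}/opD frob_conj mulmxBr mulmxBl conj_orth frobE.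
by apply: eq_bigr => i _; apply: eq_bigr => j _; rewrite !mxE; ring.
Qed.

Hypothesis lam_gt0 : forall i : 'I_n, (i < r)%N -> 0 < lam i.
Hypothesis lam_lt0 : forall i : 'I_n, (r <= i)%N -> lam i < 0.

Lemma frob_opD_res_ge0 H : 0 <= frob (D H) (H - D H).
Proof.
rewrite frob_opD_res; apply: sumr_ge0 => i _; apply: sumr_ge0 => j _.
have /andP[Om0 Om1] := Omega_ge0_le1 lam_gt0 lam_lt0 j i.
by rewrite mulr_ge0 ?sqr_ge0 // mulr_ge0 // subr_ge0.
Qed.

Lemma frob_opD_res_eq0 H : frob (D H) (H - D H) = 0 ->
  forall i j : 'I_n, (i < r)%N != (j < r)%N -> (Q^T *m H *m Q) i j = 0.
Proof.
rewrite frob_opD_res => res0 i j off.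
have term_ge0 (k l : 'I_n) : 0 <= Om k l * (1 - Om k l) * (Q^T *m H *m Q) k l ^+ 2.
  have /andP[Om0 Om1] := Omega_ge0_le1 lam_gt0 lam_lt0 k l.
  by rewrite mulr_ge0 ?sqr_ge0 // mulr_ge0 // subr_ge0.
have col0 : \sum_k Om k j * (1 - Om k j) * (Q^T *m H *m Q) k j ^+ 2 = 0.
  by apply: (psumr_eq0P _ res0) => // l _; exact: sumr_ge0.
have /eqP : Om i j * (1 - Om i j) * (Q^T *m H *m Q) i j ^+ 2 = 0.
  by apply: (psumr_eq0P _ col0) => // k _; exact: term_ge0.
have /andP[Om0 Om1] := Omega_off lam_gt0 lam_lt0 off.
by rewrite !mulf_eq0 (gt_eqF Om0) subr_eq0 (gt_eqF Om1) /= orbb => /eqP.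
Qed.

Lemma opD_blockdiag H :
  (forall i j : 'I_n, (i < r)%N != (j < r)%N -> (Q^T *m H *m Q) i j = 0) ->
  D H = Q *m blockX r (Q^T *m H *m Q) *m Q^T /\
  H - D H = Q *m blockS r (Q^T *m H *m Q) *m Q^T.
Proof.
move=> Hdiag; have QQt : Q *m Q^T = 1%:M := mulmx1C Q_orth.
have eD : D H = Q *m blockX r (Q^T *m H *m Q) *m Q^T.
  by rewrite /opD hadamard_Omega_blockdiag.
split=> //; apply/eqP; rewrite eD subr_eq -mulmxDl -mulmxDr addrC blockXS_sum //.
by rewrite !mulmxA QQt mul1mx -mulmxA QQt mulmx1.
Qed.

End SmoothingOperator.

Section FixedPointOperator.
Variables (R : realType) (m n r : nat) (A : 'I_m -> 'M[R]_n).
Variables (Q : 'M[R]_n) (lam : 'I_n -> R).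

Local Notation D := (opD r Q lam).
Local Notation M := (opM r A Q lam).

Fact opM_is_linear : linear M.
Proof.
move=> a X Y; rewrite /opM /opDperp /projPperp.
rewrite [projP A (_ - D _)]linearB [projP A (X - _)]linearB [projP A (Y - _)]linearB.
exact: (linearP ((projP A \- (projP A \o D)) \+ (D \- (projP A \o D))) a X Y).
Qed.
HB.instance Definition _ := GRing.isLinear.Build R _ _ _ M opM_is_linear.

Hypothesis A_sym : forall i, symmx (A i).
Hypothesis A_surj : forall y : 'cV[R]_m, exists X, symmx X /\ opA A X = y.
Hypothesis Q_orth : Q^T *m Q = 1%:M.
Hypothesis lam_gt0 : forall i : 'I_n, (i < r)%N -> 0 < lam i.
Hypothesis lam_lt0 : forall i : 'I_n, (r <= i)%N -> lam i < 0.

Local Notation P := (proj_span A).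
Implicit Types H K W : 'M[R]_n.

Lemma opM_eq H : M H = P (H - D H) + (D H - P (D H)).
Proof. by rewrite /opM /opDperp /projPperp !projP_proj_span. Qed.

Lemma opM_sym H : symmx H -> symmx (M H).
Proof.
move=> sH; rewrite opM_eq; apply: symmxD; first exact: symmx_lincomb.
by apply: symmxB; [exact: opD_sym | exact: symmx_lincomb].
Qed.

Lemma frob_opM_gap H : frob (M H) H - frob (M H) (M H) = frob (D H) (H - D H).
Proof.
have P_idem := proj_span_idem (gramA_unit A_sym A_surj).
have := frob_proj_swap (@frob_proj_span _ _ _ _ A) P_idem (D H) (H - D H).
by rewrite /= [D H + (H - _)]addrC subrK -opM_eq.
Qed.

Lemma opM_firm H : frob (M H) (M H) <= frob (M H) H.
Proof. by rewrite -subr_ge0 frob_opM_gap frob_opD_res_ge0. Qed.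

Local Notation hat H := (Q^T *m H *m Q).

Lemma opM_blockdiag H :
  (forall i j : 'I_n, (i < r)%N != (j < r)%N -> hat H i j = 0) ->
  M H = P (Q *m blockS r (hat H) *m Q^T) +
        (Q *m blockX r (hat H) *m Q^T - P (Q *m blockX r (hat H) *m Q^T)).
Proof. by move=> /(opD_blockdiag lam Q_orth)[DH DHres]; rewrite opM_eq DHres DH. Qed.

Lemma opM_fixE H : symmx H ->
  (M H = H <->
  [/\ forall i j : 'I_n, ~~ (i < r)%N -> (j < r)%N -> hat H i j = 0,
      opA A (Q *m blockX r (hat H) *m Q^T) = 0
    & exists y : 'cV[R]_m, Q *m blockS r (hat H) *m Q^T = opAadj A y]).
Proof.
move=> sH; have gramU := gramA_unit A_sym A_surj.
set HX := Q *m blockX r (hat H) *m Q^T; set HS := Q *m blockS r (hat H) *m Q^T.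
split=> [MH | [ll0 AHX0 [y HSy]]].
  have Hdiag : forall i j : 'I_n, (i < r)%N != (j < r)%N -> hat H i j = 0.
    apply: (frob_opD_res_eq0 Q_orth lam_gt0 lam_lt0).
    by rewrite -frob_opM_gap MH subrr.
  have [DH DHres] := opD_blockdiag lam Q_orth Hdiag; rewrite -/HX -/HS in DH DHres.
  have eH : H = HX + HS by rewrite -DH -DHres addrC subrK.
  have PHX0 : P HX = 0.
    have : P (M H) = P H by rewrite MH.
    rewrite opM_blockdiag // -/HX -/HS !linearD linearN /= !proj_span_idem //.
    rewrite subrr addr0 {1}eH linearD /=.
    by move/esym; rewrite -{2}[P HS]add0r => /addIr.
  split.
  - by move=> i j /negbTE ir jr; apply: Hdiag; rewrite ir jr.
  - by rewrite opA_coefs // -coefs_proj_span // PHX0 linear0.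
  - have PHS : P HS = HS.
      by move: MH; rewrite opM_blockdiag // -/HX -/HS PHX0 subr0 {1}eH addrC => /addrI.
    by exists (invmx (gram A) *m coefs A HS); rewrite -{1}PHS.
have Hdiag : forall i j : 'I_n, (i < r)%N != (j < r)%N -> hat H i j = 0.
  have hat_sym : (hat H)^T = hat H by rewrite !trmx_mul trmxK sH mulmxA.
  move=> i j; case ir: (i < r)%N; case jr: (j < r)%N => //= _.
    by rewrite -hat_sym mxE ll0 ?ir ?jr.
  by rewrite ll0 ?ir ?jr.
have [DH DHres] := opD_blockdiag lam Q_orth Hdiag; rewrite -/HX -/HS in DH DHres.
have PHS : P HS = HS by rewrite HSy; exact: proj_span_lincomb.
rewrite opM_blockdiag // -/HX -/HS PHS.
rewrite /proj_span -opA_coefs // AHX0 mulmx0 linear0 subr0.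
by rewrite -DH -DHres subrK.
Qed.

Definition fix_eqn H : 'M[R]_(n, n + n) := row_mx (H^T - H) (M H - H).

Fact fix_eqn_is_linear : linear fix_eqn.
Proof.
move=> a X Y; have trP : (a *: X + Y)^T = a *: X^T + Y^T by rewrite linearD linearZ.
have lin_sub (x x' y y' : 'M[R]_n) : a *: x + y - (a *: x' + y') = a *: (x - x') + (y - y').
  by rewrite scalerBr opprD addrACA.
by rewrite /fix_eqn trP [M _]linearP !lin_sub scale_row_mx add_row_mx.
Qed.
HB.instance Definition _ := GRing.isLinear.Build R _ _ _ fix_eqn fix_eqn_is_linear.

Lemma fix_eqn_eq0 H : fix_eqn H = 0 <-> isFix M H.
Proof.
rewrite /fix_eqn /isFix /symmx; split=> [/eqP|[-> ->]]; last by rewrite !subrr row_mx0.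
by rewrite row_mx_eq0 !subr_eq0 => /andP[/eqP ? /eqP ?].
Qed.

Local Notation PiF := (ker_proj fix_eqn).

Lemma symmx_proj_Fix H : symmx (PiF H).
Proof. by have /fix_eqn_eq0[] := ker_proj_ker fix_eqn H. Qed.

Lemma opM_proj_Fix H : M (PiF H) = PiF H.
Proof. by have /fix_eqn_eq0[] := ker_proj_ker fix_eqn H. Qed.

Lemma is_proj_Fix_ker_proj : is_proj_Fix M PiF.
Proof.
move=> H sH; split; first exact/fix_eqn_eq0/ker_proj_ker.
move=> K /fix_eqn_eq0 K_fix.
by rewrite inner_frob ?frob_ker_proj_res //; apply: symmxB => //; exact: symmx_proj_Fix.
Qed.

Lemma is_proj_Fix_unique Pi H : is_proj_Fix M Pi -> symmx H -> Pi H = PiF H.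
Proof.
move=> Pi_proj sH; have [Pi_fix Pi_res] := Pi_proj H sH.
have sR : symmx (H - Pi H) by apply: symmxB => //; case: Pi_fix.
apply: ker_proj_unique => [|K /fix_eqn_eq0 K_fix]; first exact/fix_eqn_eq0.
by rewrite -inner_frob // Pi_res.
Qed.

Definition orth_Fix W := symmx W /\ forall K, isFix M K -> frob W K = 0.

Lemma orth_Fix_res H : symmx H -> orth_Fix (H - PiF H).
Proof.
move=> sH; split; first exact: symmxB (symmx_proj_Fix H).
by move=> K /fix_eqn_eq0; exact: frob_ker_proj_res.
Qed.

Lemma orth_Fix_opM W : orth_Fix W -> orth_Fix (M W).
Proof.
case=> sW Wperp; split=> [|K K_fix]; first exact: opM_sym.
by apply: (firm_orth_fix opM_firm); [case: K_fix | exact: Wperp].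
Qed.

Lemma orth_Fix_iter k W : orth_Fix W -> orth_Fix (iter k M W).
Proof. by move=> Wo; elim: k => //= k; exact: orth_Fix_opM. Qed.

Lemma orth_Fix_fix_eq0 W : orth_Fix W -> M W = W -> W = 0.
Proof. by case=> sW Wperp MW; apply/frob_eq0/Wperp. Qed.

Definition orth_Fix_part H := symmpart H - PiF (symmpart H).

Fact orth_Fix_part_is_linear : linear orth_Fix_part.
Proof.
by move=> a X Y; exact: (linearP (@symmpart R n \- (PiF \o @symmpart R n)) a X Y).
Qed.
HB.instance Definition _ :=
  GRing.isLinear.Build R _ _ _ orth_Fix_part orth_Fix_part_is_linear.

Lemma orth_Fix_part_orth H : orth_Fix (orth_Fix_part H).
Proof. exact/orth_Fix_res/symmx_symmpart. Qed.

Lemma orth_Fix_part_id W : orth_Fix W -> orth_Fix_part W = W.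
Proof.
case=> sW Wperp; rewrite /orth_Fix_part symmpart_id // ker_proj_eq0 ?subr0 //.
by move=> K /fix_eqn_eq0; exact: Wperp.
Qed.

Lemma frob_orth_Fix_part_le H :
  frob (orth_Fix_part H) (orth_Fix_part H) <= frob H H.
Proof.
apply: le_trans (frob_proj_res_le (@frob_ker_proj _ _ _ _ _ fix_eqn)
  (ker_proj_idem fix_eqn) _) _.
exact: (frob_proj_le (@frob_symmpart _ _) (@symmpart_idem _ _)).
Qed.

Lemma opM_orth_Fix_part_lt H : H != 0 ->
  frob (M (orth_Fix_part H)) (M (orth_Fix_part H)) < frob H H.
Proof.
move=> H_neq0; set W := orth_Fix_part H.
have W_le := frob_orth_Fix_part_le H; have MW_le := firm_nonexp opM_firm W.
rewrite lt_neqAle (le_trans MW_le W_le) andbT; apply: contraNneq H_neq0 => eqMW.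
have MW : M W = W by apply: (firm_nonexp_eq opM_firm); lra.
have W0 : W = 0 by apply: orth_Fix_fix_eq0 (orth_Fix_part_orth H) MW.
by apply/eqP/frob_eq0; rewrite -eqMW MW W0 frob0l.
Qed.

Lemma opM_contraction : exists c : R, [/\ 0 <= c, c < 1 &
  forall W, orth_Fix W -> frob (M W) (M W) <= c ^+ 2 * frob W W].
Proof.
have [c [c0 c1 c_contr]] :=
  @uniform_contraction _ _ _ (M \o orth_Fix_part) opM_orth_Fix_part_lt.
by exists c; split=> // W /orth_Fix_part_id W_id; have := c_contr W; rewrite /= W_id.
Qed.

Lemma iter_opM_sub_proj k H : iter k M H - PiF H = iter k M (H - PiF H).
Proof. by elim: k => //= k <-; rewrite linearB /= opM_proj_Fix. Qed.

Lemma fnorm_iter_sub_proj_le Pi c k H : is_proj_Fix M Pi -> 0 <= c ->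
  (forall W, orth_Fix W -> frob (M W) (M W) <= c ^+ 2 * frob W W) ->
  symmx H -> fnorm H <= 1 -> fnorm (iter k M H - Pi H) <= c ^+ k.
Proof.
move=> Pi_proj c0 c_contr sH H_le1.
rewrite (is_proj_Fix_unique Pi_proj sH) iter_opM_sub_proj.
have Wo := orth_Fix_res sH; set W := H - PiF H in Wo *.
have frob_iter : frob (iter k M W) (iter k M W) <= (c ^+ k) ^+ 2 * frob W W.
  elim: k => [|k IH] /=; first by rewrite expr1n mul1r.
  apply: le_trans (c_contr _ (orth_Fix_iter k Wo)) _.
  rewrite [c ^+ k.+1]exprS exprMn -[leRHS]mulrA.
  by apply: ler_wpM2l IH; exact: exprn_ge0.
have W_le : frob W W <= frob H H.
  exact: (frob_proj_res_le (@frob_ker_proj _ _ _ _ _ fix_eqn) (ker_proj_idem fix_eqn)).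
have H_le : frob H H <= 1 by rewrite -fnorm_sqr // expr_le1 ?sqrtr_ge0.
rewrite -(ler_pXn2r (n := 2)) // ?nnegrE ?sqrtr_ge0 ?exprn_ge0 //.
rewrite fnorm_sqr; last by case: (orth_Fix_iter k Wo).
apply: le_trans frob_iter _; rewrite -[leRHS]mulr1 ler_wpM2l ?exprn_ge0 //.
exact: le_trans W_le H_le.
Qed.

End FixedPointOperator.

Lemma opnorm_le (R : realType) n (T : 'M[R]_n -> 'M[R]_n) (b : R) :
  (forall H, symmx H -> fnorm H <= 1 -> fnorm (T H) <= b) -> 0 <= opnorm T <= b.
Proof.
move=> T_le; set E := [set fnorm (T H) | H in [set H | symmx H /\ fnorm H <= 1]].
have E0 : E (fnorm (T 0)).
  by exists 0 => //; split; [exact: symmx0 | rewrite /fnorm /inner mul0mx mxtrace0 sqrtr0].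
have E_ub : ubound E b by move=> _ [H [sH H_le] <-]; exact: T_le.
apply/andP; split; last by apply: ge_sup => //; exists (fnorm (T 0)).
apply: le_trans (sqrtr_ge0 _) (sup_upper_bound _ E0) => //.
by split; [exists (fnorm (T 0)) | exists b].
Qed.
Theorem proposition1 (R : realType) (m n : nat)
  (A : 'I_m -> 'M[R]_n) (C : 'M[R]_n) (b : 'cV[R]_m)
  (Xs : 'M[R]_n) (ys : 'cV[R]_m) (Ss : 'M[R]_n) (sigma : R)
  (Q : 'M[R]_n) (lam : 'I_n -> R) :
  (* data: symmetric A_i, C; 𝒜 surjective onto R^m *)
  (forall i, symmx (A i)) -> symmx C ->
  (forall y : 'cV[R]_m, exists X, symmx X /\ opA A X = y) ->
  (* (Xs, ys, Ss) is a KKT point *)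
  opA A Xs = b -> psdmx Xs ->
  opAadj A ys + Ss = C -> psdmx Ss ->
  inner Xs Ss = 0 ->
  (* strict complementarity *)
  (\rank Xs + \rank Ss = n)%N ->
  0 < sigma ->
  (* eigendecomposition of Z = Xs - sigma Ss *)
  Q^T *m Q = 1%:M ->
  Xs - sigma *: Ss = Q *m diag_mx (\row_i lam i) *m Q^T ->
  (forall i j : 'I_n, (i <= j)%N -> lam j <= lam i) ->
  (forall i : 'I_n, (i < \rank Xs)%N -> 0 < lam i) ->
  (forall i : 'I_n, (\rank Xs <= i)%N -> lam i < 0) ->
  let r : nat := \rank Xs in
  let M := opM r A Q lam in
  (* (a) firm nonexpansiveness *)
  (forall H, symmx H -> fnorm (M H) ^+ 2 <= inner (M H) H) /\
  (* (c) characterization of Fix(M) *)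
  (forall H, symmx H ->
     let Hh := Q^T *m H *m Q in
     isFix M H <->
     [/\ (forall p q : 'I_n, ~~ (p < r)%N -> (q < r)%N -> Hh p q = 0),
         opA A (Q *m (\matrix_(p, q) if (p < r)%N && (q < r)%N then Hh p q else 0)
                  *m Q^T) = 0
       & exists y : 'cV[R]_m,
           Q *m (\matrix_(p, q) if ~~ (p < r)%N && ~~ (q < r)%N then Hh p q else 0)
             *m Q^T = opAadj A y]) /\
  (* the orthogonal projection onto Fix(M) exists, and for it: *)
  (exists Pi, is_proj_Fix M Pi) /\
  (forall Pi, is_proj_Fix M Pi ->
     (* (b) M^k -> Pi_Fix(M) *)
     (fun k : nat => opnorm (fun H => iter k M H - Pi H)) @ \oo --> (0 : R) /\
     (* (d) ||M - Pi_Fix(M)||_op < 1 *)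
     opnorm (fun H => M H - Pi H) < 1).
Proof.
move=> A_sym _ A_surj _ _ _ _ _ _ _ Q_orth _ _ lam_gt0 lam_lt0 r M.
have [c [c0 c1 c_contr]] := opM_contraction A_sym A_surj Q_orth lam_gt0 lam_lt0.
split=> [H sH|]; last split=> [H sH|]; last split.
- have sMH : symmx (M H) by apply: opM_sym.
  by rewrite fnorm_sqr // inner_frob //; exact: (opM_firm A_sym A_surj Q_orth lam_gt0 lam_lt0).
- have fixE := opM_fixE A_sym A_surj Q_orth lam_gt0 lam_lt0 sH.
  by move=> Hh; split=> [[_ /fixE]|/fixE MH].
- by exists (ker_proj (fix_eqn r A Q lam)); exact: is_proj_Fix_ker_proj.
move=> Pi Pi_proj.
have opnorm_iter k : 0 <= opnorm (fun H => iter k M H - Pi H) <= c ^+ k.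
  apply: opnorm_le => H sH H_le1.
  exact: (fnorm_iter_sub_proj_le A_sym A_surj Q_orth lam_gt0 lam_lt0).
split.
  apply: (@squeeze_cvgr _ _ _ _ (fun=> 0) (fun k => c ^+ k)); first exact: nearW.
    exact: cvg_cst.
  by apply: cvg_expr; rewrite ger0_norm.
by have /andP[_ /le_lt_trans->] := opnorm_iter 1%N.
Qed.
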